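(* Let $p_{ij}\ge0$ ($i,j\in\{1,2\}$) with $p_{11}+p_{12}\le1$, $p_{21}+p_{22}\le1$, let $\epsilon_1,\epsilon_2\ge0$, $c=(c_1,c_2)\in\mathbb{R}^2$, and $$P_1=\begin{pmatrix}p_{11}-\epsilon_1&p_{12}\\ p_{21}-\epsilon_2&p_{22}\end{pmatrix},\qquad P_2=\begin{pmatrix}p_{11}&p_{12}-\epsilon_1\\ p_{21}&p_{22}-\epsilon_2\end{pmatrix}.$$ Assume $\det(I-P_1)>0$ and $\det(I-P_2)>0$, and let $x=(I-P_1)^{-1}c$ and $y=(I-P_2)^{-1}c$. If $x_1\ge x_2$ and $y_2\ge y_1$, then $x=y$ and $x_1=x_2$ (so the common fixed point is a multiple of $(1,1)$). In particular, unless $x=y$ is a multiple of $(1,1)$, at most one of the conditions $x_1\ge x_2$ (the fixed point of $P_1$ lies in the region where $P_1$ is active) and $y_2\ge y_1$ (the fixed point of $P_2$ lies in the region where $P_2$ is active) holds.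
   Context: For a two-state fixed policy, the operator $x\mapsto c+\max\{\hat Px-\epsilon\max_{s}x_s,0\}$ acts as $x\mapsto c+P_1x$ on the region $x_1\ge x_2$ (when the maxima with $0$ are attained by the first argument), and as $x\mapsto c+P_2x$ on the region $x_2\ge x_1$; here $\hat P=(p_{ij})$. *)

From mathcomp Require Import all_boot all_order all_algebra.
Set Implicit Arguments. Unset Strict Implicit. Unset Printing Implicit Defensive.
Import Order.TTheory GRing.Theory Num.Theory.
Local Open Scope ring_scope.

Definition mx2 {R : pzRingType} (a b c d : R) : 'M[R]_2 :=
  \matrix_(i < 2, j < 2)
    if i == 0 then (if j == 0 then a else b) else (if j == 0 then c else d).

Definition cv2 {R : pzRingType} (a b : R) : 'cV[R]_2 :=
  \col_(i < 2) if i == 0 then a else b.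

From mathcomp Require Import all_boot all_order all_algebra.
From mathcomp Require Import ring lra.

(* Subtracting the fixed-point equations, d := x - y solves
   (I - (p_ij)) d = -(x1 - y2) (e1, e2).  When x2 <= x1, y1 <= y2 and y2 <= x1, the
   first row of this system is a sum of nonnegative terms that vanishes; fed
   into the second row this gives (x1 - y2) det(I - P2) = 0, and then
   (x1 - x2) det(I - P1) = 0.  Exchanging the two states and the roles of x and
   y covers the case x1 <= y2, so x1 = y2 always, and both conclusions follow. *)

Set Implicit Arguments.
Unset Strict Implicit.
Unset Printing Implicit Defensive.

Import Order.TTheory GRing.Theory Num.Theory.
Local Open Scope ring_scope.

Lemma det_mx22 (R : comNzRingType) (A : 'M[R]_2) :
  \det A = A 0 0 * A 1 1 - A 0 1 * A 1 0.
Proof.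
rewrite (expand_det_row _ 0) !big_ord_recl big_ord0 /cofactor !det_mx11 !mxE /=.
rewrite expr0 expr1 mulN1r mul1r addr0 mulrN.
by congr (_ * A _ _ - A _ _ * A _ _); apply/val_inj.
Qed.

Lemma cv2E (R : pzRingType) (x : 'cV[R]_2) : x = cv2 (x 0 0) (x 1 0).
Proof.
apply/matrixP => i j; rewrite !mxE (ord1 j).
by case: i => [[|[|//]] ?]; congr (x _ _); apply/val_inj.
Qed.

Lemma mx2_solve (R : fieldType) (A : 'M[R]_2) (u v : R) :
  \det A != 0 ->
  let x := invmx A *m cv2 u v in
  A 0 0 * x 0 0 + A 0 1 * x 1 0 = u /\ A 1 0 * x 0 0 + A 1 1 * x 1 0 = v.
Proof.
move=> detA x; have : A *m x = cv2 u v by rewrite mulKVmx // unitmxE unitfE.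
clearbody x; rewrite [x]cv2E => /matrixP Ax.
split; [move: (Ax 0 0) | move: (Ax 1 0)];
  rewrite !mxE !big_ord_recl big_ord0 !mxE /= addr0 => <-;
  by congr (A _ _ * _ + A _ _ * _); apply/val_inj.
Qed.

Lemma fixpoints_meet_of_le (R : realFieldType)
    (p11 p12 p21 p22 e1 e2 c1 c2 x1 x2 y1 y2 : R) :
  0 <= p11 -> 0 <= p12 -> 0 <= p21 -> 0 <= p22 ->
  p11 + p12 <= 1 -> p21 + p22 <= 1 -> 0 <= e1 -> 0 <= e2 ->
  0 < (1 - (p11 - e1)) * (1 - p22) - p12 * (p21 - e2) ->
  0 < (1 - p11) * (1 - (p22 - e2)) - (p12 - e1) * p21 ->
  (1 - (p11 - e1)) * x1 - p12 * x2 = c1 ->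
  (1 - p22) * x2 - (p21 - e2) * x1 = c2 ->
  (1 - p11) * y1 - (p12 - e1) * y2 = c1 ->
  (1 - (p22 - e2)) * y2 - p21 * y1 = c2 ->
  x2 <= x1 -> y1 <= y2 -> y2 <= x1 ->
  x1 = y2 /\ x2 = y2.
Proof.
move=> p11_ge0 p12_ge0 p21_ge0 p22_ge0 row1_le1 row2_le1 e1_ge0 e2_ge0
  det1_gt0 det2_gt0 x_eq1 x_eq2 y_eq1 y_eq2 x_active y_active y2_le_x1.
have gap_ge0 : 0 <= x1 - y2 by rewrite subr_ge0.
have dx_ge0 : 0 <= x1 - x2 by rewrite subr_ge0.
have dy_ge0 : 0 <= y2 - y1 by rewrite subr_ge0.
have p11_le1 : 0 <= 1 - p11 by lra.
have p22_le1 : 0 <= 1 - p22 by lra.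
have slack1_ge0 : 0 <= 1 - p11 - p12 by lra.
have slack1_e1_ge0 : 0 <= 1 - p11 - p12 + e1 by lra.
have row1 : (x1 - y2) * (1 - p11 - p12 + e1) + (1 - p11) * (y2 - y1)
            + p12 * (x1 - x2) = 0 by lra.
have row2 : (x1 - y2) * (1 - p21 - p22 + e2)
            = (1 - p22) * (x1 - x2) + p21 * (y2 - y1) by lra.
have [gap_slack1 dy_p11 dx_p12] : [/\ (x1 - y2) * (1 - p11 - p12 + e1) = 0,
    (1 - p11) * (y2 - y1) = 0 & p12 * (x1 - x2) = 0].
  move/eqP: row1; rewrite !paddr_eq0 ?addr_ge0 ?mulr_ge0 //.
  by case/andP => /andP[/eqP -> /eqP ->] /eqP ->.
have gap_e1 : (x1 - y2) * e1 = 0.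
  move/eqP: gap_slack1; rewrite mulrDr paddr_eq0 ?mulr_ge0 //.
  by case/andP => _ /eqP.
have dy_p12 : p12 * (y2 - y1) = 0.
  apply/le_anti; rewrite mulr_ge0 // andbT -dy_p11.
  by rewrite ler_wpM2r // lerBrDl.
have x1_y2 : x1 = y2.
  (* det(I - P2) = (1 - p11 - p12 + e1) (1 - p22 + e2)
                   + (p12 - e1) (1 - p21 - p22 + e2) *)
  have : (x1 - y2) * ((1 - p11) * (1 - (p22 - e2)) - (p12 - e1) * p21) = 0.
    have -> : (x1 - y2) * ((1 - p11) * (1 - (p22 - e2)) - (p12 - e1) * p21)
        = (x1 - y2) * (1 - p11 - p12 + e1) * (1 - p22 + e2)
          + (1 - p22) * (p12 * (x1 - x2)) + p21 * (p12 * (y2 - y1))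
          - (x1 - y2) * e1 * (1 - p21 - p22 + e2)
          + p12 * ((x1 - y2) * (1 - p21 - p22 + e2)
                   - ((1 - p22) * (x1 - x2) + p21 * (y2 - y1))) by ring.
    by rewrite gap_slack1 dx_p12 dy_p12 gap_e1 row2 subrr; ring.
  by move/eqP; rewrite mulf_eq0 (gt_eqF det2_gt0) orbF subr_eq0 => /eqP.
have x1_x2 : x1 = x2.
  have dx_p22 : (1 - p22) * (x1 - x2) = 0.
    move: row2; rewrite {1}x1_y2 subrr mul0r => /esym/eqP.
    by rewrite paddr_eq0 ?mulr_ge0 // => /andP[/eqP].
  have : (x1 - x2) * ((1 - (p11 - e1)) * (1 - p22) - p12 * (p21 - e2)) = 0.
    have -> : (x1 - x2) * ((1 - (p11 - e1)) * (1 - p22) - p12 * (p21 - e2))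
        = (1 - (p11 - e1)) * ((1 - p22) * (x1 - x2))
          - (p21 - e2) * (p12 * (x1 - x2)) by ring.
    by rewrite dx_p22 dx_p12; ring.
  by move/eqP; rewrite mulf_eq0 (gt_eqF det1_gt0) orbF subr_eq0 => /eqP.
by rewrite -x1_x2.
Qed.

Theorem mainTheorem8 (R : realFieldType)
  (p11 p12 p21 p22 e1 e2 c1 c2 : R) :
  0 <= p11 -> 0 <= p12 -> 0 <= p21 -> 0 <= p22 ->
  p11 + p12 <= 1 -> p21 + p22 <= 1 ->
  0 <= e1 -> 0 <= e2 ->
  let P1 := mx2 (p11 - e1) p12 (p21 - e2) p22 in
  let P2 := mx2 p11 (p12 - e1) p21 (p22 - e2) in
  let c := cv2 c1 c2 in
  0 < \det (1%:M - P1) -> 0 < \det (1%:M - P2) ->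
  let x := invmx (1%:M - P1) *m c in
  let y := invmx (1%:M - P2) *m c in
  x 1 0 <= x 0 0 -> y 0 0 <= y 1 0 ->
  x = y /\ x 0 0 = x 1 0.
Proof.
move=> p11_ge0 p12_ge0 p21_ge0 p22_ge0 row1_le1 row2_le1 e1_ge0 e2_ge0 P1 P2 c
  det1 det2 x y x_active y_active.
have [x_eq1 x_eq2] := mx2_solve c1 c2 (lt0r_neq0 det1).
have [y_eq1 y_eq2] := mx2_solve c1 c2 (lt0r_neq0 det2).
rewrite -/x -/y in x_eq1 x_eq2 y_eq1 y_eq2; clearbody x y.
rewrite !det_mx22 !mxE /= in det1 det2 x_eq1 x_eq2 y_eq1 y_eq2.
have meet_x : y 1 0 <= x 0 0 -> x 0 0 = y 1 0 /\ x 1 0 = y 1 0.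
  apply: (@fixpoints_meet_of_le R p11 p12 p21 p22 e1 e2 c1 c2
            (x 0 0) (x 1 0) (y 0 0)) => //; lra.
have meet_y : x 0 0 <= y 1 0 -> y 1 0 = x 0 0 /\ y 0 0 = x 0 0.
  apply: (@fixpoints_meet_of_le R p22 p21 p12 p11 e2 e1 c2 c1
            (y 1 0) (y 0 0) (x 1 0)) => //; lra.
have x1_y2 : x 0 0 = y 1 0.
  by case/orP: (le_total (y 1 0) (x 0 0)) => [/meet_x[] | /meet_y[]].
move: meet_x meet_y; rewrite x1_y2 lexx => /(_ isT)[_ x2_y2] /(_ isT)[_ y1_y2].
split; last by rewrite x2_y2.
by rewrite [x]cv2E [y]cv2E x1_y2 x2_y2 y1_y2.
Qed.
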